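(* Let $k,r\geq 1$, let $1\le a\le b\le k$, let $1\le d\le r$, and let $I_d\subseteq\{1,\dots,r\}$ with $|I_d|=d$. Then for every $n\geq k$, $$\Bigl|S_n^{(r)}\Bigl(\bigcup_{m=a}^{b}T_{k,r}^m(I_d)\Bigr)\Bigr|=(k-1)!\,r^{k-1}\prod_{j=k}^n\bigl(d(k+a-b-1)+j(r-d)\bigr).$$
   Context: For $n,r\ge1$, $S_n^{(r)}$ denotes the set of coloured permutations of length $n$ with $r$ colours: sequences $\phi=(\phi_1,\dots,\phi_n)$ where $\phi_i=a_i^{(c_i)}$, $(a_1,\dots,a_n)$ is a permutation of $\{1,\dots,n\}$ and each $c_i\in\{1,\dots,r\}$ is the colour of $a_i$. For $\phi=(\tau_1^{(s_1)},\dots,\tau_k^{(s_k)})\in S_k^{(r)}$ and $\psi=(\alpha_1^{(v_1)},\dots,\alpha_n^{(v_n)})\in S_n^{(r)}$, an occurrence of $\phi$ in $\psi$ is a sequence of indices $1\le i_1<\dots<i_k\le n$ such that $(\alpha_{i_1},\dots,\alpha_{i_k})$ is order-isomorphic to $(\tau_1,\dots,\tau_k)$ and $v_{i_j}=s_j$ for all $j$. $\psi$ contains $\phi$ if there is at least one occurrence, and avoids $\phi$ otherwise. For a set $T$ of coloured patterns, $S_n^{(r)}(T)$ is the set of $\psi\in S_n^{(r)}$ avoiding every $\phi\in T$. For $I_d\subseteq\{1,\dots,r\}$ with $|I_d|=d$ and $1\le m\le k$, $T_{k,r}^m(I_d)$ is the set of all $\phi\in S_k^{(r)}$ whose first entry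 is $\phi_1=m^{(c)}$ for some colour $c\in I_d$. *)

From mathcomp Require Import all_boot all_fingroup.
Set Implicit Arguments. Unset Strict Implicit. Unset Printing Implicit Defensive.

(* A coloured permutation of length n with r colours, 0-indexed:
   positions are 'I_n, the underlying permutation p maps position i to the
   value a_{i+1} - 1, and c i : 'I_r is the colour minus 1. *)
Definition cperm (n r : nat) : finType := ({perm 'I_n} * {ffun 'I_n -> 'I_r})%type.

Definition occurrence (k n r : nat) (phi : cperm k r) (psi : cperm n r)
  (f : {ffun 'I_k -> 'I_n}) : bool :=
  [forall j : 'I_k, forall j' : 'I_k, (j < j') ==> (f j < f j')] &&
  [forall j : 'I_k, forall j' : 'I_k,
     (psi.1 (f j) < psi.1 (f j')) == (phi.1 j < phi.1 j')] &&
  [forall j : 'I_k, psi.2 (f j) == phi.2 j].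

Definition contains (k n r : nat) (phi : cperm k r) (psi : cperm n r) : bool :=
  [exists f : {ffun 'I_k -> 'I_n}, occurrence phi psi f].

Definition avoiders (k n r : nat) (T : pred (cperm k r)) : {set cperm n r} :=
  [set psi : cperm n r | [forall phi : cperm k r, T phi ==> ~~ contains phi psi]].

(* T_{k,r}^m(I): first entry is m^{(c)} with c in I (1-indexed m, colour). *)
Definition inT (k r m : nat) (I : {set 'I_r}) (phi : cperm k r) : bool :=
  [exists i : 'I_k, [&& val i == 0, (val (phi.1 i)).+1 == m & phi.2 i \in I]].

Definition inTunion (k r a b : nat) (I : {set 'I_r}) (phi : cperm k r) : bool :=
  [exists m : 'I_b.+1, (a <= m) && inT m I phi].

From mathcomp Require Import all_boot all_order all_fingroup zify.
Set Implicit Arguments. Unset Strict Implicit. Unset Printing Implicit Defensive.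

(* Split a coloured permutation psi of length n+1 into its first entry v^(c)
   and the standardised rest. Every pattern of the union T starts with an entry
   of value m in [a, b] and colour in I, so an occurrence of it either lies in
   the rest or begins at the first entry of psi. The latter is possible exactly
   when c is in I, psi has at least k entries, and at least a-1 smaller and
   k-b larger values follow v: then the k entries whose values fill a suitable
   window around v form a pattern of T. So psi avoids T iff its rest does and
   its first entry is one of the (n+1) r - d (n+1 - (k+a-b-1)) allowed ones
   (all (n+1) r when n+1 < k), and the formula follows by induction on n. *)

Lemma card_ord_window N lo len : lo + len <= N ->
  #|[set y : 'I_N | lo <= y < lo + len]| = len.
Proof.
move=> le_N; have lt_N (i : 'I_len) : lo + i < N by rewrite (leq_trans _ le_N) ?ltn_add2l.
have -> : [set y : 'I_N | lo <= y < lo + len] = [set Ordinal (lt_N i) | i : 'I_len].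
  apply/setP => y; rewrite inE; apply/idP/imsetP => [/andP[ge_y lt_y] | [i _ ->]].
    have lt_len : y - lo < len by lia.
    by exists (Ordinal lt_len); last by apply: val_inj => /=; lia.
  by rewrite /= leq_addr ltn_add2l ltn_ord.
by rewrite card_imset ?card_ord // => i j [/addnI/val_inj].
Qed.

Lemma card_perm_window N (s : {perm 'I_N}) lo len : lo + len <= N ->
  #|[set i | lo <= s i < lo + len]| = len.
Proof.
move=> le_N; rewrite -[X in _ = X](card_ord_window le_N).
rewrite -[X in _ = X](card_preimset _ (@perm_inj _ s)).
by apply: eq_card => i; rewrite !inE.
Qed.

Lemma perm_window_leq k N (s : {perm 'I_k}) (g : 'I_k -> 'I_N) lo len lo' len' :
  injective g -> lo + len <= k -> lo' + len' <= N ->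
  (forall j, lo <= s j < lo + len -> lo' <= g j < lo' + len') -> len <= len'.
Proof.
move=> g_inj le_k le_N g_win.
rewrite -[X in X <= _](card_perm_window s le_k) -(card_imset _ g_inj).
rewrite -[X in _ <= X](card_ord_window le_N).
apply/subset_leq_card/subsetP => _ /imsetP[j + ->].
by rewrite !inE => /g_win.
Qed.

Section Occurrences.

Variables k N r : nat.
Implicit Types (phi : cperm k r) (psi : cperm N r) (f : {ffun 'I_k -> 'I_N}).

Lemma occurrenceP phi psi f :
  reflect [/\ forall j j' : 'I_k, j < j' -> f j < f j',
              forall j j', (psi.1 (f j) < psi.1 (f j')) = (phi.1 j < phi.1 j')
            & forall j, psi.2 (f j) = phi.2 j]
          (occurrence phi psi f).
Proof.
rewrite /occurrence -andbA; apply: (iffP and3P) => [[] | [inc ord col]].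
  move=> /forallP inc /forallP ord /forallP col; split=> [j j' | j j' | j].
  - by move: (inc j) => /forallP/(_ j')/implyP; apply.
  - by move: (ord j) => /forallP/(_ j')/eqP.
  - exact/eqP/col.
split; apply/forallP => j; try apply/forallP => j'.
- exact/implyP/inc.
- exact/eqP/ord.
- exact/eqP/col.
Qed.

Lemma occurrence_inj phi psi f : occurrence phi psi f -> injective f.
Proof.
case/occurrenceP => inc _ _ j j' eq_f.
by case: (ltngtP j j') => [/inc | /inc | /val_inj //]; rewrite eq_f ltnn.
Qed.

Lemma occurrence_value_bounds phi psi f j : occurrence phi psi f ->
  phi.1 j <= psi.1 (f j) /\ k - phi.1 j <= N - psi.1 (f j).
Proof.
move=> occ; have [_ ord _] := occurrenceP _ _ _ occ.
have g_inj : injective (fun j => psi.1 (f j)) by move=> i i' /perm_inj/(occurrence_inj occ).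
have lt_k := ltn_ord (phi.1 j); have lt_N := ltn_ord (psi.1 (f j)).
split.
  apply: (perm_window_leq (s := phi.1) g_inj (lo := 0) (lo' := 0)); rewrite ?add0n 1?ltnW //.
  by move=> i; rewrite /= ord.
suff : k - (phi.1 j).+1 <= N - (psi.1 (f j)).+1 by lia.
apply: (perm_window_leq (s := phi.1) g_inj (lo := (phi.1 j).+1) (lo' := (psi.1 (f j)).+1)).
- by rewrite subnKC.
- by rewrite subnKC.
move=> i /andP[lt_ij _]; rewrite ord lt_ij /=; have := ltn_ord (psi.1 (f i)).
by rewrite subnKC.
Qed.

Lemma window_subpattern psi lo : lo + k <= N ->
  exists phi f, [/\ occurrence phi psi f,
                    forall j, psi.1 (f j) = lo + phi.1 j :> nat
                  & forall i, lo <= psi.1 i < lo + k -> exists j, f j = i].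
Proof.
move=> le_N; set S := [set i | lo <= psi.1 i < lo + k].
have cardS : #|S| = k by exact: card_perm_window.
pose f (j : 'I_k) : 'I_N := Order.enum_val (cast_ord (esym cardS) j).
have f_mono i j : (f i <= f j) = (i <= j).
  exact: (@Order.le_enum_val _ _ (@Order.le_total _ _) (mem S) (cast_ord _ i) (cast_ord _ j)).
have win j : lo <= psi.1 (f j) < lo + k.
  by have := Order.enum_valP (cast_ord (esym cardS) j); rewrite inE.
have f_onto i : lo <= psi.1 i < lo + k -> exists j, f j = i.
  move=> win_i; have iS : i \in S by rewrite inE.
  exists (cast_ord cardS (Order.enum_rank_in iS i)).
  by rewrite /f cast_ordK Order.enum_rankK_in.
clearbody f.
have f_inj : injective f.
  by move=> i j eq_f; apply/val_inj/eqP; rewrite eqn_leq -!f_mono eq_f leqnn.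
have ge_lo j : lo <= psi.1 (f j) by case/andP: (win j).
have lt_k j : psi.1 (f j) - lo < k by rewrite ltn_subLR //; case/andP: (win j).
pose s (j : 'I_k) : 'I_k := Ordinal (lt_k j).
have s_inj : injective s.
  move=> i j /(congr1 val) /= /eqP; rewrite eqn_sub2rE // => /eqP eq_ij.
  exact: f_inj (perm_inj (ord_inj eq_ij)).
exists (perm s_inj, [ffun j => psi.2 (f j)]), [ffun j => f j]; split.
- apply/occurrenceP; split=> [i j | i j | j]; rewrite !ffunE //=.
    by rewrite !ltnNge f_mono.
  by rewrite !permE /= ltn_sub2rE.
- by move=> j; rewrite ffunE permE /= subnKC.
- by move=> i /f_onto[j <-]; exists j; rewrite ffunE.
Qed.

End Occurrences.

Section Cons.

Variables n r : nat.

Definition cperm_cons (x : 'I_n.+1 * 'I_r * cperm n r) : cperm n.+1 r :=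
  (lift_perm ord0 x.1.1 x.2.1,
   [ffun i => if unlift ord0 i is Some j then x.2.2 j else x.1.2]).

Lemma cperm_cons_value0 x : (cperm_cons x).1 ord0 = x.1.1.
Proof. exact: lift_perm_id. Qed.

Lemma cperm_cons_colour0 x : (cperm_cons x).2 ord0 = x.1.2.
Proof. by rewrite ffunE unlift_none. Qed.

Lemma cperm_cons_inj : injective cperm_cons.
Proof.
move=> [[v c] [p col]] [[v' c'] [p' col']] [eq_p eq_col].
have eq_v : v = v' by rewrite -(lift_perm_id ord0 v p) eq_p lift_perm_id.
subst v'; congr (_, _, (_, _)).
- by move/ffunP: eq_col => /(_ ord0); rewrite !ffunE unlift_none.
- apply/permP => i; apply: (@lift_inj _ v).
  by rewrite -!(lift_perm_lift ord0) eq_p.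
- by apply/ffunP => i; move/ffunP: eq_col => /(_ (lift ord0 i)); rewrite !ffunE liftK.
Qed.

Lemma cperm_cons_surj psi : exists x, psi = cperm_cons x.
Proof.
case: psi => p col.
pose tail i := odflt i (unlift (p ord0) (p (lift ord0 i))).
have lift_tail i : lift (p ord0) (tail i) = p (lift ord0 i).
  rewrite /tail; case: unliftP => [j -> // | /perm_inj eq0].
  by have := neq_lift ord0 i; rewrite eq0 eqxx.
have tail_inj : injective tail.
  move=> i j eq_ij; apply: (@lift_inj _ ord0); apply: (@perm_inj _ p).
  by rewrite -!lift_tail eq_ij.
exists (p ord0, col ord0, (perm tail_inj, [ffun i => col (lift ord0 i)])).
congr (_, _).
  apply/permP => i; case: (unliftP ord0 i) => [j -> | ->].
    by rewrite lift_perm_lift permE lift_tail.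
  by rewrite lift_perm_id.
by apply/ffunP => i; rewrite ffunE; case: (unliftP ord0 i) => [j -> | ->]; rewrite ?ffunE.
Qed.

Lemma occurrence_cons_lift k (phi : cperm k r) x (g : {ffun 'I_k -> 'I_n}) :
  occurrence phi (cperm_cons x) [ffun j => lift ord0 (g j)] = occurrence phi x.2 g.
Proof.
rewrite /occurrence; congr (_ && _ && _).
- by apply: eq_forallb => j; apply: eq_forallb => j'; rewrite !ffunE !lift0 ltnS.
- apply: eq_forallb => j; apply: eq_forallb => j'.
  by rewrite !ffunE /= !lift_perm_lift /= !ltnNge leq_bump2.
- by apply: eq_forallb => j; rewrite !ffunE liftK.
Qed.

Lemma occurrence_cons_tail k (phi : cperm k r) x (f : {ffun 'I_k -> 'I_n.+1}) :
  occurrence phi (cperm_cons x) f -> (forall j, f j != ord0) -> contains phi x.2.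
Proof.
move=> occ f_neq0; have lt_n j : (f j).-1 < n.
  by have := ltn_ord (f j); have := f_neq0 j; rewrite -val_eqE /=; case: (val (f j)).
apply/existsP; exists [ffun j => Ordinal (lt_n j)]; rewrite -occurrence_cons_lift.
congr occurrence: occ; apply/ffunP => j; rewrite !ffunE; apply/val_inj => /=.
by rewrite /bump leq0n add1n prednK // lt0n; apply: f_neq0.
Qed.

End Cons.

Lemma card_avoiders0 k r (T : pred (cperm k r)) : 0 < k -> #|avoiders 0 T| = 1.
Proof.
move=> k_gt0; have -> : avoiders 0 T = setT.
  apply/setP => psi; rewrite !inE; apply/forallP => phi; apply/implyP => _.
  by apply/existsP => -[f _]; case: (f (Ordinal k_gt0)).
by rewrite cardsT card_prod card_Sn card_ffun !card_ord.
Qed.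

Section FirstEntry.

Variables k r a b : nat.
Variable I : {set 'I_r}.

(* Values are 0-indexed: the first entry [h] is followed by [h.1] smaller and
   [n - h.1] larger values. *)
Definition head_forbidden n (h : 'I_n.+1 * 'I_r) : bool :=
  [&& h.2 \in I, a.-1 <= h.1, k - b <= n - h.1 & k.-1 <= n].

Lemma occurrence_cons_cases n (phi : cperm k r) x (f : {ffun 'I_k -> 'I_n.+1}) :
  inTunion a b I phi -> occurrence phi (cperm_cons x) f ->
  head_forbidden x.1 \/ contains phi x.2.
Proof.
case/existsP => m /andP[ge_am /existsP[i0 /and3P[/eqP i0_0 /eqP phi_i0 i0_I]]] occ.
have [inc _ col] := occurrenceP _ _ _ occ.
have [f_i0 | f_i0] := eqVneq (f i0) ord0.
  left; have [ge_v le_v] := occurrence_value_bounds i0 occ.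
  rewrite /head_forbidden -cperm_cons_colour0 -f_i0 col i0_I /=.
  rewrite f_i0 cperm_cons_value0 in ge_v le_v.
  have := ltn_ord m; have := ltn_ord x.1.1.
  move: (phi.1 i0) (x.1.1) phi_i0 ge_v le_v => p v /= *.
  by apply/and3P; split; lia.
have le_f j : f i0 <= f j.
  have [j_0 | j_gt0] := posnP j; last by apply/ltnW/inc; rewrite i0_0.
  by rewrite (_ : j = i0) //; apply: val_inj; rewrite /= j_0 i0_0.
right; apply: occurrence_cons_tail occ _ => j.
apply: contra f_i0 => /eqP f_j; rewrite -(inj_eq val_inj) /= -leqn0.
by rewrite (leq_trans (le_f j)) // f_j.
Qed.

Hypotheses (a_gt0 : 0 < a) (le_ab : a <= b) (le_bk : b <= k).

Lemma head_forbidden_contains n (x : 'I_n.+1 * 'I_r * cperm n r) :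
  head_forbidden x.1 ->
  exists2 phi : cperm k r, inTunion a b I phi & contains phi (cperm_cons x).
Proof.
case: x => [[v c] psi] /and4P[/= c_I ge_v le_v le_kn]; have lt_v := ltn_ord v.
(* The pattern's first entry gets value m, the least admissible value leaving
   room for the k - m larger entries. *)
set m := maxn a (k - (n - v)).
have ge_am : a <= m := leq_maxl _ _.
have lt_mb : m < b.+1 by rewrite ltnS geq_max le_ab; lia.
have le_win : v.+1 - m + k <= n.+1 by rewrite /m; lia.
have [phi [f [occ val_f onto_f]]] := window_subpattern (cperm_cons ((v, c), psi)) le_win.
have [inc _ col] := occurrenceP _ _ _ occ.
have [j0 f_j0] : exists j0, f j0 = ord0 by apply: onto_f; rewrite cperm_cons_value0 /= /m; lia.
have j0_0 : val j0 = 0.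
  have [// | j0_gt0] := posnP j0.
  by have := inc (Ordinal (ltn_trans j0_gt0 (ltn_ord j0))) j0 j0_gt0; rewrite f_j0.
exists phi; last by apply/existsP; exists f.
apply/existsP; exists (Ordinal lt_mb); rewrite /= ge_am; apply/existsP; exists j0.
rewrite j0_0 -col f_j0 cperm_cons_colour0 c_I andbT /=.
have := val_f j0; rewrite f_j0 cperm_cons_value0 /= /m => val_j0.
apply/eqP; lia.
Qed.

Lemma cperm_cons_avoiders n (x : 'I_n.+1 * 'I_r * cperm n r) :
  (cperm_cons x \in avoiders n.+1 (@inTunion k r a b I)) =
  ~~ head_forbidden x.1 && (x.2 \in avoiders n (@inTunion k r a b I)).
Proof.
rewrite !inE; apply/forallP/andP => [avoid | [allowed /forallP avoid] phi].
  split.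
    apply/negP => /head_forbidden_contains[phi T_phi].
    by apply/negP; have := avoid phi; rewrite T_phi.
  apply/forallP => phi; apply/implyP => T_phi; apply/negP => /existsP[g occ].
  have := avoid phi; rewrite T_phi /= => /negP; apply; apply/existsP.
  by exists [ffun j => lift ord0 (g j)]; rewrite occurrence_cons_lift.
apply/implyP => T_phi; apply/negP => /existsP[f /(occurrence_cons_cases T_phi)][].
  exact/negP.
by apply/negP; have := avoid phi; rewrite T_phi.
Qed.

Lemma card_avoiders_succ n :
  #|avoiders n.+1 (@inTunion k r a b I)| =
  #|[set h : 'I_n.+1 * 'I_r | ~~ head_forbidden h]| * #|avoiders n (@inTunion k r a b I)|.
Proof.
rewrite -cardsX -(card_imset _ (@cperm_cons_inj n r)); apply: eq_card => psi.
have [x ->] := cperm_cons_surj psi.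
by case: x => [h t]; rewrite (mem_imset _ _ (@cperm_cons_inj n r)) cperm_cons_avoiders in_setX inE.
Qed.

(* [j] is the length of the coloured permutation whose first entry is chosen. *)
Definition allowed_heads d j :=
  if k <= j then d * (k + a - b - 1) + j * (r - d) else r * j.

Lemma card_head_allowed n :
  #|[set h : 'I_n.+1 * 'I_r | ~~ head_forbidden h]| = allowed_heads #|I| n.+1.
Proof.
have le_dr : #|I| <= r by rewrite -[X in _ <= X]card_ord max_card.
set e := k + a - b - 1.
rewrite cardsCs card_prod !card_ord /allowed_heads -/e.
have [le_kn | lt_nk] := leqP k n.+1.
  have -> : #|~: [set h : 'I_n.+1 * 'I_r | ~~ head_forbidden h]| = (n.+1 - e) * #|I|.
    rewrite -[n.+1 - e](@card_ord_window n.+1 a.-1); last by rewrite /e; lia.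
    rewrite -cardsX; apply: eq_card => -[v c]; rewrite !inE negbK /head_forbidden /=.
    have := ltn_ord v; case: (c \in I); rewrite ?andbT ?andbF //= => lt_v.
    by apply/and3P/andP => -[] *; try split; rewrite /e; lia.
  have le_en : e <= n.+1 by rewrite /e; lia.
  nia.
have -> : ~: [set h : 'I_n.+1 * 'I_r | ~~ head_forbidden h] = set0.
  apply/setP => -[v c]; rewrite !inE negbK /head_forbidden /=.
  by rewrite [k.-1 <= n]leqNgt (_ : n < k.-1) ?andbF //; lia.
by rewrite cards0 subn0 mulnC.
Qed.

Lemma card_avoiders n :
  #|avoiders n (@inTunion k r a b I)| = \prod_(1 <= j < n.+1) allowed_heads #|I| j.
Proof.
have k_gt0 : 0 < k by apply: leq_trans a_gt0 (leq_trans le_ab le_bk).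
elim: n => [|n IHn]; first by rewrite card_avoiders0 ?big_geq.
by rewrite card_avoiders_succ card_head_allowed IHn [RHS]big_nat_recr //= mulnC.
Qed.

End FirstEntry.

Theorem mainTheorem2 (k r a b d : nat) (I : {set 'I_r}) (n : nat) :
  1 <= k -> 1 <= r -> 1 <= a -> a <= b -> b <= k ->
  1 <= d -> d <= r -> #|I| = d -> k <= n ->
  #|avoiders n (@inTunion k r a b I)| =
    (k.-1)`! * r ^ k.-1 *
    \prod_(k <= j < n.+1) (d * (k + a - b - 1) + j * (r - d)).
Proof.
move=> k_gt0 _ a_gt0 le_ab le_bk _ _ card_I le_kn.
rewrite card_avoiders // card_I (@big_cat_nat _ _ _ k) //=; last exact: leqW.
congr (_ * _); last by apply: eq_big_nat => j /andP[le_kj _]; rewrite /allowed_heads le_kj.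
rewrite (@eq_big_nat _ _ _ 1 k _ (fun j => r * j)) => [|j /andP[_ lt_jk]]; last first.
  by rewrite /allowed_heads leqNgt lt_jk.
by rewrite big_split prod_nat_const_nat fact_prod mulnC prednK // subn1.
Qed.
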